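(* Let $\mathcal{A}$ be a finite-dimensional unital associative algebra over a field $\mathrm{k}$. Then $\mathcal{A}$ has only finitely many subalgebras if and only if $\mathcal{A}$ has only finitely many subalgebras generated by one element (i.e. of the form $\mathrm{k}[y]$, $y\in\mathcal{A}$).
   Context: Subalgebras are unital (contain $1$). *)

From HB Require Import structures.
From mathcomp Require Import all_boot all_order all_algebra all_field.
Set Implicit Arguments. Unset Strict Implicit. Unset Printing Implicit Defensive.
Import GRing.Theory.
Local Open Scope ring_scope.

Definition unital_subalg (K : fieldType) (A : falgType K) (U : {vspace A}) : bool :=
  (1 \in U) && (U * U <= U)%VS.

(* k[y] : the subalgebra generated by y, i.e. agenv (1 + <[y]>) *)
Definition kgen (K : fieldType) (A : falgType K) (y : A) : {vspace A} :=
  <<1%VS; y>>%VS.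

Definition finitely_many_subalgebras (K : fieldType) (A : falgType K) : Prop :=
  exists s : seq {vspace A}, forall U : {vspace A}, unital_subalg U -> U \in s.

Definition finitely_many_monogenic_subalgebras (K : fieldType) (A : falgType K) : Prop :=
  exists s : seq {vspace A}, forall y : A, kgen y \in s.

From mathcomp Require Import all_boot all_order all_algebra all_field.
Set Implicit Arguments. Unset Strict Implicit. Unset Printing Implicit Defensive.
Import GRing.Theory.
Local Open Scope ring_scope.

(* A subalgebra U is the sum of the k[u] with u in U.  If there are only
   finitely many monogenic subalgebras, say those listed in s, then U is
   the sum of the members of s contained in U, so U is determined by a
   subset of s: there are at most 2^|s| subalgebras. *)

Lemma filter_in_masks (T : eqType) (s : seq T) (P : pred T) :
  filter P s \in [seq mask (val m) s | m : (size s).-tuple bool].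
Proof.
have size_Ps : size (map P s) == size s by rewrite size_map.
by apply/mapP; exists (Tuple size_Ps); rewrite ?mem_enum //= filter_mask.
Qed.

Section SumOfCover.
Variables (K : fieldType) (vT : vectType K).

Lemma sumv_seq_sup (s : seq {vspace vT}) (P : pred {vspace vT}) (V : {vspace vT}) :
  V \in s -> P V -> (V <= \sum_(W <- s | P W) W)%VS.
Proof. by move=> sV PV; rewrite (big_rem V sV) PV addvSl. Qed.

Lemma sumv_seq_sub (s : seq {vspace vT}) (P : pred {vspace vT}) (U : {vspace vT}) :
  (forall V, P V -> V <= U)%VS -> (\sum_(W <- s | P W) W <= U)%VS.
Proof.
by move=> PU; elim/big_rec: _ => [|V W PV sWU]; rewrite ?sub0v // subv_add PU.
Qed.

Lemma sumv_sub_cover (s : seq {vspace vT}) (U : {vspace vT}) :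
    (forall u, u \in U -> exists2 V, V \in s & (u \in V) && (V <= U)%VS) ->
  U = (\sum_(V <- s | (V <= U)%VS) V)%VS.
Proof.
move=> coverU; apply/eqP; rewrite eqEsubv sumv_seq_sub // andbT.
apply/subvP=> u /coverU[V sV /andP[Vu sVU]].
by apply: subvP (sumv_seq_sup sV sVU) u Vu.
Qed.

End SumOfCover.

Section Monogenic.
Variables (K : fieldType) (A : falgType K).

Lemma mem_kgen (y : A) : y \in kgen y.
Proof. exact: memv_adjoin. Qed.

Lemma kgen_unital_subalg (y : A) : unital_subalg (kgen y).
Proof. by rewrite /unital_subalg agenvM subvv andbT memvE sub1_agenv. Qed.

Lemma kgen_sub (U : {vspace A}) (u : A) :
  unital_subalg U -> u \in U -> (kgen u <= U)%VS.
Proof.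
case/andP=> U1 sUUU Uu; have sU1 : (1 <= U)%VS by rewrite -memvE.
have sU1u : (1 + <[u]> <= U)%VS by rewrite subv_add sU1 -memvE.
by apply: agenv_sub_modl => //; apply: subv_trans (prodvSl _ sU1u) sUUU.
Qed.

End Monogenic.

Theorem lemma3p9 (K : fieldType) (A : falgType K) :
  finitely_many_subalgebras A <-> finitely_many_monogenic_subalgebras A.
Proof.
split=> [[s subalg_s] | [s kgen_s]].
  by exists s => y; apply/subalg_s/kgen_unital_subalg.
exists [seq (\sum_(V <- t) V)%VS | t <- [seq mask (val m) s | m : (size s).-tuple bool]].
move=> U subalgU; have kgen_cover : forall u, u \in U ->
    exists2 V, V \in s & (u \in V) && (V <= U)%VS.
  by move=> u Uu; exists (kgen u); rewrite ?kgen_s ?mem_kgen ?kgen_sub.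
rewrite (sumv_sub_cover kgen_cover) -big_filter.
exact/map_f/filter_in_masks.
Qed.
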